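(* Let $f:\mathbb{R}^d\to\mathbb{R}^d$ be a homeomorphism with the forward topological shadowing property. Then $f$ satisfies the topological shadowing property.
   Context: $\mathbb{R}^d$ carries the Euclidean metric $d$; $\mathcal{C}^+=\{\epsilon:\mathbb{R}^d\to\mathbb{R}^+ : \epsilon \text{ continuous}\}$. For $\delta\in\mathcal{C}^+$, a sequence $\{x_n\}_{n\in\mathbb{Z}}$ is a $\delta$-pseudo-orbit of $f$ if $d(f(x_n),x_{n+1})<\delta(f(x_n))$ for every $n\in\mathbb{Z}$. The homeomorphism $f$ satisfies the topological shadowing property if for every $\epsilon\in\mathcal{C}^+$ there exists $\delta\in\mathcal{C}^+$ such that for every $\delta$-pseudo-orbit $\{x_n\}$ there is $y$ with $d(f^n(y),x_n)<\epsilon(x_n)$ for all $n\in\mathbb{Z}$. The homeomorphism $f$ satisfies the forward topological shadowing property if for every $\epsilon\in\mathcal{C}^+$ there exists $\delta\in\mathcal{C}^+$ such that for every $\delta$-pseudo-orbit $\{x_n\}_{n\in\mathbb{Z}}$ there exists $y\in\mathbb{R}^d$ with $d(f^n(y),x_n)\le\epsilon(x_n)$ for all $n\ge 0$. *)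

From Stdlib Require Fin.
From Stdlib Require Import Reals Lra ZArith.
Open Scope R_scope.

Definition Rd (d : nat) : Type := Fin.t d -> R.

Fixpoint fin_sum (d : nat) : (Fin.t d -> R) -> R :=
  match d return (Fin.t d -> R) -> R with
  | O => fun _ => 0
  | S n => fun g => g Fin.F1 + fin_sum n (fun i => g (Fin.FS i))
  end.

Definition dist {d : nat} (x y : Rd d) : R :=
  sqrt (fin_sum d (fun i => (x i - y i) ^ 2)).

Definition continuous_Rd {d : nat} (f : Rd d -> Rd d) : Prop :=
  forall x (e : R), 0 < e -> exists del, 0 < del /\
    forall y, dist x y < del -> dist (f x) (f y) < e.

Definition continuous_to_R {d : nat} (g : Rd d -> R) : Prop :=
  forall x (e : R), 0 < e -> exists del, 0 < del /\
    forall y, dist x y < del -> Rabs (g x - g y) < e.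

Definition homeomorphism {d : nat} (f : Rd d -> Rd d) : Prop :=
  exists g : Rd d -> Rd d,
    continuous_Rd f /\ continuous_Rd g /\
    (forall x, g (f x) = x) /\ (forall y, f (g y) = y).

Definition Cplus {d : nat} (eps : Rd d -> R) : Prop :=
  continuous_to_R eps /\ forall x, 0 < eps x.

Definition iter {d : nat} (f : Rd d -> Rd d) (n : nat) (x : Rd d) : Rd d :=
  Nat.iter n f x.

Definition zpow {d : nat} (f g : Rd d -> Rd d) (n : Z) (x : Rd d) : Rd d :=
  match n with
  | Z0 => x
  | Zpos p => iter f (Pos.to_nat p) x
  | Zneg p => iter g (Pos.to_nat p) x
  end.

Definition pseudo_orbit {d : nat} (f : Rd d -> Rd d) (delta : Rd d -> R)
  (xs : Z -> Rd d) : Prop :=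
  forall n : Z, dist (f (xs n)) (xs (n + 1)%Z) < delta (f (xs n)).

(* f^n(y) for n : Z, defined via any two-sided inverse g of f. *)
Definition topological_shadowing {d : nat} (f : Rd d -> Rd d) : Prop :=
  forall eps, Cplus eps -> exists delta, Cplus delta /\
    forall xs, pseudo_orbit f delta xs ->
      exists y, forall g : Rd d -> Rd d,
        (forall x, g (f x) = x) -> (forall x, f (g x) = x) ->
        forall n : Z, dist (zpow f g n y) (xs n) < eps (xs n).

Definition forward_topological_shadowing {d : nat} (f : Rd d -> Rd d) : Prop :=
  forall eps, Cplus eps -> exists delta, Cplus delta /\
    forall xs, pseudo_orbit f delta xs ->
      exists y, forall n : nat, dist (iter f n y) (xs (Z.of_nat n)) <= eps (xs (Z.of_nat n)).

(* Shadow the pseudo-orbit started at time -k forward by a point whose k-th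
   image z_k then follows the whole pseudo-orbit from time -k on, within eps/2.
   The z_k stay within eps(x_0)/2 of x_0, so by Bolzano-Weierstrass a
   subsequence converges to some v; for each fixed n the map f^n is continuous,
   so f^n(v) inherits the bound eps(x_n)/2 up to an arbitrarily small error,
   which is strictly below eps(x_n). *)

From Stdlib Require Import Reals Lra Lia ZArith ClassicalEpsilon.
Open Scope R_scope.

Lemma fin_sum_le d (h k : Fin.t d -> R) :
  (forall i, h i <= k i) -> fin_sum d h <= fin_sum d k.
Proof.
  induction d as [|d IH]; intros Hhk; simpl; [lra|].
  pose proof (Hhk Fin.F1).
  pose proof (IH (fun i => h (Fin.FS i)) (fun i => k (Fin.FS i)) (fun i => Hhk (Fin.FS i))).
  lra.
Qed.

Lemma fin_sum_nonneg d (h : Fin.t d -> R) :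
  (forall i, 0 <= h i) -> 0 <= fin_sum d h.
Proof.
  induction d as [|d IH]; intros Hh; simpl; [lra|].
  pose proof (Hh Fin.F1); pose proof (IH (fun i => h (Fin.FS i)) (fun i => Hh (Fin.FS i))).
  lra.
Qed.

Lemma fin_sum_lin d (h k : Fin.t d -> R) a b :
  fin_sum d (fun i => a * h i + b * k i) = a * fin_sum d h + b * fin_sum d k.
Proof.
  revert h k; induction d as [|d IH]; intros h k; simpl; [ring|].
  rewrite (IH (fun i => h (Fin.FS i)) (fun i => k (Fin.FS i))); ring.
Qed.

Lemma fin_sum_term d (h : Fin.t d -> R) i :
  (forall i, 0 <= h i) -> h i <= fin_sum d h.
Proof.
  revert h i; induction d as [|d IH]; intros h i Hh.
  - destruct (Fin.case0 (fun _ => False) i).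
  - pattern i; apply Fin.caseS'; simpl.
    + pose proof (fin_sum_nonneg d (fun i => h (Fin.FS i)) (fun i => Hh (Fin.FS i))); lra.
    + intros p; pose proof (IH (fun i => h (Fin.FS i)) p (fun i => Hh (Fin.FS i))).
      pose proof (Hh Fin.F1); lra.
Qed.

Lemma dist_nonneg d (x y : Rd d) : 0 <= dist x y.
Proof. apply sqrt_pos. Qed.

Lemma dist_sqr d (x y : Rd d) : dist x y ^ 2 = fin_sum d (fun i => (x i - y i) ^ 2).
Proof. apply pow2_sqrt, fin_sum_nonneg; intros; apply pow2_ge_0. Qed.

(* A weak triangle inequality, which suffices here and avoids Cauchy-Schwarz. *)
Lemma dist_sqr_le d (a b c : Rd d) :
  dist a c ^ 2 <= 2 * dist a b ^ 2 + 2 * dist b c ^ 2.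
Proof.
  rewrite !dist_sqr, <- fin_sum_lin; apply fin_sum_le; intros i.
  pose proof (pow2_ge_0 (a i - 2 * b i + c i)); nra.
Qed.

Lemma Rabs_coord_le_dist d (x y : Rd d) i : Rabs (x i - y i) <= dist x y.
Proof.
  rewrite <- sqrt_Rsqr_abs; apply sqrt_le_1_alt.
  pose proof (fin_sum_term d (fun i => (x i - y i) ^ 2) i (fun i => pow2_ge_0 _)).
  simpl in *; unfold Rsqr; lra.
Qed.

Lemma dist_lt_sqrt d (x y : Rd d) r :
  0 < r -> fin_sum d (fun i => (x i - y i) ^ 2) < r ^ 2 -> dist x y < r.
Proof.
  intros Hr Hs; unfold dist; rewrite <- (sqrt_pow2 r) by lra.
  apply sqrt_lt_1; [apply fin_sum_nonneg; intros; apply pow2_ge_0 | apply pow2_ge_0 | exact Hs].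
Qed.

Definition subseq (phi : nat -> nat) : Prop := forall k, (phi k < phi (S k))%nat.

Lemma subseq_ge phi : subseq phi -> forall j, (j <= phi j)%nat.
Proof. intros H j; induction j; [lia|]; specialize (H j); lia. Qed.

Lemma subseq_le phi : subseq phi -> forall a b, (a <= b)%nat -> (phi a <= phi b)%nat.
Proof. intros H a b Hab; induction Hab; [lia|]; specialize (H m); lia. Qed.

Lemma subseq_comp phi psi : subseq phi -> subseq psi -> subseq (fun k => phi (psi k)).
Proof.
  intros Hphi Hpsi k; pose proof (Hphi (psi k)).
  pose proof (subseq_le phi Hphi (S (psi k)) (psi (S k)) (Hpsi k)); lia.
Qed.

Definition cvg_R (u : nat -> R) (l : R) : Prop :=
  forall r, 0 < r -> exists J, forall j, (J <= j)%nat -> Rabs (u j - l) < r.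

Lemma cvg_R_subseq u l phi : subseq phi -> cvg_R u l -> cvg_R (fun j => u (phi j)) l.
Proof.
  intros Hphi Hu r Hr; destruct (Hu r Hr) as [J HJ]; exists J; intros j Hj.
  apply HJ; pose proof (subseq_ge phi Hphi j); lia.
Qed.

Lemma bolzano_weierstrass_R (u : nat -> R) M :
  (forall k, Rabs (u k) <= M) -> exists phi l, subseq phi /\ cvg_R (fun j => u (phi j)) l.
Proof.
  intros HM.
  destruct (Bolzano_Weierstrass u (fun c => -M <= c <= M) (compact_P3 (-M) M)) as [l Hl].
  { intros n; specialize (HM n); pose proof (Rle_abs (u n)); pose proof (Rle_abs (- u n)).
    rewrite Rabs_Ropp in *; lra. }
  assert (Hclose : forall Nk : nat * nat,
             exists p, (fst Nk <= p)%nat /\ Rabs (u p - l) < / (INR (snd Nk) + 1)).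
  { intros [N k]; simpl.
    assert (Hpos : 0 < / (INR k + 1)) by (apply Rinv_0_lt_compat; pose proof (pos_INR k); lra).
    destruct (Hl (fun y => Rabs (y - l) < / (INR k + 1)) N) as [p Hp]; [|exists p; exact Hp].
    exists (mkposreal _ Hpos); intros y Hy; exact Hy. }
  apply choice in Hclose as [next Hnext].
  set (phi := fix phi n := match n with O => next (O, O) | S k => next (S (phi k), S k) end).
  assert (Hphi : forall k, Rabs (u (phi k) - l) < / (INR k + 1)).
  { intros [|k]; apply (Hnext (_, _)). }
  exists phi, l; split.
  - intros k; exact (proj1 (Hnext (S (phi k), S k))).
  - intros r Hr; destruct (archimed_cor1 r Hr) as [J [HJ HJ0]]; exists J; intros j Hj.
    eapply Rlt_trans; [apply Hphi|]; eapply Rle_lt_trans; [|exact HJ].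
    apply Rinv_le_contravar; [apply lt_0_INR; lia|]; apply le_INR in Hj; lra.
Qed.

Definition cvg_Rd {d} (u : nat -> Rd d) (v : Rd d) : Prop :=
  forall r, 0 < r -> exists J, forall j, (J <= j)%nat -> dist v (u j) < r.

Definition coord_cvg {d} (u : nat -> Rd d) (v : Rd d) : Prop :=
  forall i, cvg_R (fun j => u j i) (v i).

Lemma coord_cvg_sum d (u : nat -> Rd d) v : coord_cvg u v ->
  forall s, 0 < s -> exists J, forall j, (J <= j)%nat -> fin_sum d (fun i => (v i - u j i) ^ 2) < s.
Proof.
  revert u v; induction d as [|d IH]; intros u v Hcv s Hs.
  - exists O; intros; simpl; lra.
  - destruct (IH (fun j i => u j (Fin.FS i)) (fun i => v (Fin.FS i))
                  (fun i => Hcv (Fin.FS i)) (s / 2)) as [J1 HJ1]; [lra|].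
    assert (Hq : 0 < sqrt (s / 2)) by (apply sqrt_lt_R0; lra).
    destruct (Hcv Fin.F1 _ Hq) as [J2 HJ2].
    exists (Nat.max J1 J2); intros j Hj; simpl.
    specialize (HJ1 j ltac:(lia)); specialize (HJ2 j ltac:(lia)); simpl in *.
    rewrite Rabs_minus_sym in HJ2.
    pose proof (pow2_abs (v Fin.F1 - u j Fin.F1)); pose proof (Rabs_pos (v Fin.F1 - u j Fin.F1)).
    pose proof (pow2_sqrt (s / 2) ltac:(lra)); nra.
Qed.

Lemma cvg_Rd_of_coord_cvg d (u : nat -> Rd d) v : coord_cvg u v -> cvg_Rd u v.
Proof.
  intros Hcv r Hr; destruct (coord_cvg_sum d u v Hcv (r ^ 2) ltac:(nra)) as [J HJ].
  exists J; intros j Hj; apply dist_lt_sqrt; auto.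
Qed.

Lemma bolzano_weierstrass_coord d (z : nat -> Rd d) (M : Fin.t d -> R) :
  (forall k i, Rabs (z k i) <= M i) ->
  exists phi v, subseq phi /\ coord_cvg (fun j => z (phi j)) v.
Proof.
  revert z M; induction d as [|d IH]; intros z M HM.
  - exists (fun k => k), (z O); split; [intros k; lia|].
    intros i; destruct (Fin.case0 (fun _ => False) i).
  - destruct (IH (fun k i => z k (Fin.FS i)) (fun i => M (Fin.FS i)) (fun k i => HM k (Fin.FS i)))
      as [phi1 [v1 [Hphi1 Hcv1]]].
    destruct (bolzano_weierstrass_R (fun k => z (phi1 k) Fin.F1) (M Fin.F1)
                (fun k => HM (phi1 k) Fin.F1)) as [phi2 [l [Hphi2 Hl]]].
    exists (fun k => phi1 (phi2 k)), (fun i => Fin.caseS' i (fun _ => R) l v1).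
    split; [exact (subseq_comp phi1 phi2 Hphi1 Hphi2)|].
    intros i; pattern i; apply Fin.caseS'; [exact Hl|].
    intros p; exact (cvg_R_subseq (fun j => z (phi1 j) (Fin.FS p)) (v1 p) phi2 Hphi2 (Hcv1 p)).
Qed.

Lemma bolzano_weierstrass_Rd d (z : nat -> Rd d) (a : Rd d) c :
  (forall k, dist (z k) a <= c) -> exists phi v, subseq phi /\ cvg_Rd (fun j => z (phi j)) v.
Proof.
  intros Hc.
  destruct (bolzano_weierstrass_coord d z (fun i => Rabs (a i) + c)) as [phi [v [Hphi Hcv]]].
  { intros k i; pose proof (Rabs_coord_le_dist d (z k) a i) as Hi; specialize (Hc k).
    pose proof (Rabs_triang (z k i - a i) (a i)).
    replace (z k i - a i + a i) with (z k i) in * by ring; lra. }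
  exists phi, v; split; [exact Hphi | exact (cvg_Rd_of_coord_cvg d _ v Hcv)].
Qed.

Lemma dist_lt_of_cvg d (F : Rd d -> Rd d) (u : nat -> Rd d) v x c :
  continuous_Rd F -> cvg_Rd u v -> 0 < c ->
  (exists N, forall j, (N <= j)%nat -> dist (F (u j)) x <= c) -> dist (F v) x < 2 * c.
Proof.
  intros HF Hu Hc [N HN].
  destruct (HF v (c / 2) ltac:(lra)) as [r [Hr HFr]].
  destruct (Hu r Hr) as [J HJ].
  specialize (HN (Nat.max N J) ltac:(lia)); specialize (HFr _ (HJ (Nat.max N J) ltac:(lia))).
  pose proof (dist_sqr_le d (F v) (F (u (Nat.max N J))) x).
  pose proof (dist_nonneg d (F v) x); pose proof (dist_nonneg d (F v) (F (u (Nat.max N J)))).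
  pose proof (dist_nonneg d (F (u (Nat.max N J))) x).
  nra.
Qed.

Lemma continuous_Rd_comp d (F G : Rd d -> Rd d) :
  continuous_Rd F -> continuous_Rd G -> continuous_Rd (fun x => F (G x)).
Proof.
  intros HF HG x e He; destruct (HF (G x) e He) as [d1 [Hd1 H1]].
  destruct (HG x d1 Hd1) as [d2 [Hd2 H2]]; exists d2; split; auto.
Qed.

Lemma continuous_Rd_id d : continuous_Rd (fun x : Rd d => x).
Proof. intros x e He; exists e; split; auto. Qed.

Lemma continuous_Rd_ext d (F G : Rd d -> Rd d) :
  (forall x, F x = G x) -> continuous_Rd F -> continuous_Rd G.
Proof.
  intros HFG HF x e He; destruct (HF x e He) as [del [Hdel H]].
  exists del; split; auto; intros y Hy; rewrite <- !HFG; auto.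
Qed.

Lemma continuous_iter d (f : Rd d -> Rd d) n : continuous_Rd f -> continuous_Rd (iter f n).
Proof.
  intros Hf; induction n as [|n IH]; [apply continuous_Rd_id|].
  exact (continuous_Rd_comp d f (iter f n) Hf IH).
Qed.

Lemma continuous_zpow d (f g : Rd d -> Rd d) n :
  continuous_Rd f -> continuous_Rd g -> continuous_Rd (zpow f g n).
Proof.
  intros Hf Hg; destruct n; simpl; [apply continuous_Rd_id | apply continuous_iter; auto ..].
Qed.

Lemma left_inverse_unique d (f g g' : Rd d -> Rd d) :
  (forall x, g (f x) = x) -> (forall y, f (g' y) = y) -> forall y, g y = g' y.
Proof. intros Hg Hg' y; rewrite <- (Hg' y) at 1; apply Hg. Qed.

Lemma iter_add d (f : Rd d -> Rd d) a b y : iter f (a + b) y = iter f a (iter f b y).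
Proof. apply Nat.iter_add. Qed.

Lemma iter_cancel d (f g : Rd d -> Rd d) :
  (forall x, g (f x) = x) -> forall p x, iter g p (iter f p x) = x.
Proof.
  intros H p; induction p as [|p IH]; intros x; [reflexivity|].
  unfold iter in *; rewrite (Nat.iter_succ_r p _ f x); simpl; rewrite IH; apply H.
Qed.

Lemma zpow_iter d (f g : Rd d -> Rd d) :
  (forall x, g (f x) = x) ->
  forall (k m : nat) y, zpow f g (Z.of_nat m - Z.of_nat k) (iter f k y) = iter f m y.
Proof.
  intros H k m y; remember (Z.of_nat m - Z.of_nat k)%Z as n eqn:Hn.
  destruct n as [|p|p]; simpl.
  - replace m with k by lia; reflexivity.
  - replace m with (Pos.to_nat p + k)%nat by lia; rewrite iter_add; reflexivity.
  - replace k with (Pos.to_nat p + m)%nat by lia; rewrite iter_add; apply iter_cancel; auto.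
Qed.

Lemma Cplus_half d (eps : Rd d -> R) : Cplus eps -> Cplus (fun x => eps x / 2).
Proof.
  intros [Hc Hp]; split; [|intros x; specialize (Hp x); lra].
  intros x e He; destruct (Hc x e He) as [del [Hd H]]; exists del; split; auto.
  intros y Hy; specialize (H y Hy); apply Rabs_def2 in H; apply Rabs_def1; lra.
Qed.

Lemma pseudo_orbit_shift d (f : Rd d -> Rd d) delta xs k :
  pseudo_orbit f delta xs -> pseudo_orbit f delta (fun n => xs (n - k)%Z).
Proof.
  intros Hpo n; replace (n + 1 - k)%Z with (n - k + 1)%Z by ring; apply Hpo.
Qed.

Lemma shadowing_from_time d (f : Rd d -> Rd d) (eps delta : Rd d -> R) xs (k : nat) :
  (forall ys, pseudo_orbit f delta ys ->
     exists y, forall n : nat, dist (iter f n y) (ys (Z.of_nat n)) <= eps (ys (Z.of_nat n))) ->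
  pseudo_orbit f delta xs ->
  exists z, forall g, (forall x, g (f x) = x) ->
    forall n, (- Z.of_nat k <= n)%Z -> dist (zpow f g n z) (xs n) <= eps (xs n).
Proof.
  intros Hsh Hpo.
  destruct (Hsh _ (pseudo_orbit_shift d f delta xs (Z.of_nat k) Hpo)) as [y Hy].
  exists (iter f k y); intros g Hg n Hn.
  specialize (Hy (Z.to_nat (n + Z.of_nat k))); simpl in Hy.
  replace n with (Z.of_nat (Z.to_nat (n + Z.of_nat k)) - Z.of_nat k)%Z by lia.
  rewrite zpow_iter by exact Hg; exact Hy.
Qed.

Theorem mainTheorem6 (d : nat) (f : Rd d -> Rd d) :
  homeomorphism f -> forward_topological_shadowing f -> topological_shadowing f.
Proof.
  intros [g0 [Hf [Hg0 [Hg0f Hfg0]]]] Hfw eps Heps.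
  destruct (Hfw _ (Cplus_half d eps Heps)) as [delta [Hdelta Hsh]].
  exists delta; split; [exact Hdelta|]; intros xs Hpo.
  destruct (choice _ (fun k : nat =>
    shadowing_from_time d f (fun x => eps x / 2) delta xs k Hsh Hpo)) as [z Hz].
  destruct (bolzano_weierstrass_Rd d z (xs 0%Z) (eps (xs 0%Z) / 2)) as [phi [v [Hphi Hcv]]].
  { intros k; exact (Hz k g0 Hg0f 0%Z ltac:(lia)). }
  exists v; intros g Hgf _ n.
  assert (Hg : continuous_Rd g).
  { apply (continuous_Rd_ext d g0 g); [|exact Hg0].
    intros y; symmetry; exact (left_inverse_unique d f g g0 Hgf Hfg0 y). }
  replace (eps (xs n)) with (2 * (eps (xs n) / 2)) by field.
  apply (dist_lt_of_cvg d _ _ v _ _ (continuous_zpow d f g n Hf Hg) Hcv).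
  - pose proof (proj2 Heps (xs n)); lra.
  - exists (Z.to_nat (Z.abs n)); intros j Hj.
    apply Hz; [exact Hgf|]; pose proof (subseq_ge phi Hphi j); lia.
Qed.
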